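(* Let $N\ge 1$ be an integer and let $T\geq N^{3}$. Then in the $T$-period forecasting game with forecast grid $D=\{1/(2N),3/(2N),\dots,(2N-1)/(2N)\}$ there exists a mixed strategy of the forecaster such that $\mathbb{E}[K_T]\le 1/N$ against every mixed strategy of the rainmaker.
   Context: Forecasting game: fix a positive integer $N$, the grid $D=\{1/(2N),3/(2N),\dots,(2N-1)/(2N)\}\subset[0,1]$ (which has $N$ points), and a horizon $T$. In each period $t=1,\dots,T$ the rainmaker chooses the weather $a_t\in\{0,1\}$ (1 = rain) and the forecaster chooses a forecast $c_t\in D$; both players have perfect recall, i.e. each may condition its period-$t$ choice on the full history $h_{t-1}=(a_1,c_1,\dots,a_{t-1},c_{t-1})\in(\{0,1\}\times D)^{t-1}$. A pure strategy of a player is a map from histories to its choice set; a mixed strategy is a probability distribution over its (finitely many) pure strategies. For $d\in D$ let $n(d)=\sum_{t=1}^T \mathbf 1_{c_t=d}$ and, when $n(d)>0$, $\bar a(d)=\frac{1}{n(d)}\sum_{t=1}^T\mathbf 1_{c_t=d}\,a_t$. The calibration score is $K_T=\sum_{d\in D}\frac{n(d)}{T}\,|\bar a(d)-d|$ (terms with $n(d)=0$ are $0$); equivalently $K_T=\frac1T\sum_{d\in D}\big|\sum_{t=1}^T\mathbf 1_{c_t=d}(a_t-d)\big|$. Expectations are over the random choices of both players. *)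

From HB Require Import structures.
From mathcomp Require Import all_boot all_order all_algebra.
From mathcomp Require Import reals.
Set Implicit Arguments. Unset Strict Implicit. Unset Printing Implicit Defensive.
Import Order.TTheory GRing.Theory Num.Theory.
Local Open Scope ring_scope.

Definition grid (R : realType) (N : nat) (i : 'I_N) : R :=
  (2 * i + 1)%:R / (2 * N)%:R.

(* A history is the list of past (weather, forecast) pairs, oldest first;
   weather true = rain (a_t = 1). *)
Definition history (N : nat) := seq (bool * 'I_N).

Definition rain_strat (N : nat) := history N -> bool.
Definition fc_strat (N : nat) := history N -> 'I_N.

Fixpoint play (N : nat) (r : rain_strat N) (f : fc_strat N) (n : nat)
  : history N :=
  match n with
  | 0 => [::]
  | n'.+1 => let h := play r f n' in rcons h (r h, f h)
  end.

Definition calib (R : realType) (N T : nat) (h : history N) : R :=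
  T%:R^-1 * \sum_(i < N)
     `| \sum_(p <- h) (if p.2 == i then (p.1%:R - grid R i) else 0) |.

(* A mixed strategy: a probability distribution over finitely many pure
   strategies, given as a finite list of (probability, pure strategy). *)
Definition is_mixed (R : realType) (S : Type) (m : seq (R * S)) : Prop :=
  all (fun p => 0 <= p.1) m /\ \sum_(p <- m) p.1 = 1.

Definition expected_calib (R : realType) (N T : nat)
  (mf : seq (R * fc_strat N)) (mr : seq (R * rain_strat N)) : R :=
  \sum_(p <- mf) \sum_(q <- mr) p.1 * q.1 * calib R T (play q.2 p.2 T).

From HB Require Import structures.
From mathcomp Require Import all_boot all_order all_algebra.
From mathcomp Require Import reals.
From mathcomp Require Import ring lra.
From Stdlib Require Import IndefiniteDescription.
Set Implicit Arguments. Unset Strict Implicit. Unset Printing Implicit Defensive.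
Import Order.TTheory GRing.Theory Num.Theory.
Local Open Scope ring_scope.

(* The forecaster tracks, for every grid cell [i], the signed error
   [S_i = sum_{t : c_t = i} (a_t - grid i)] and the potential
   [P = sum_i ((|S_i| - n_i / (2N))^+)^2].  At every history a minimax argument
   over the grid yields a forecast mixing at most two cells under which [P]
   grows by at most [1/4] in expectation, whatever the rainmaker does; hence
   [E[P_T] <= T/4].  Writing [|S_i| <= n_i / (2N) + x_i] with
   [P = sum_i x_i^2], AM-GM [x_i <= x_i^2 / (2 lam) + lam / 2] with
   [lam = T / (2N^2)] gives [E[K_T] <= 1/(2N) + 1/(4N) + N^2/(4T)], which is
   at most [1/N] when [T >= N^3].  Kuhn's construction turns the
   resulting behaviour strategy into a mixture of pure strategies. *)

Section WeightedLists.
Variable R : numDomainType.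

Lemma all_allpairs (A B C : Type) (P : pred A) (Q : pred B) (Z : pred C)
    (f : A -> B -> C) s t :
  all P s -> all Q t -> (forall x y, P x -> Q y -> Z (f x y)) ->
  all Z [seq f x y | x <- s, y <- t].
Proof.
elim: s => [//|x s IH] /andP[px ps] qt H.
rewrite allpairs_cons all_cat IH // andbT all_map.
by apply: sub_all qt => y /H; apply.
Qed.

Lemma ler_wsum (A : Type) (s : seq (R * A)) (F G : A -> R) :
  all (fun x => 0 <= x.1) s -> (forall a, F a <= G a) ->
  \sum_(x <- s) x.1 * F x.2 <= \sum_(x <- s) x.1 * G x.2.
Proof.
move=> + FG; elim: s => [|x s IH] /=; first by rewrite !big_nil.
by case/andP=> x0 /IH; rewrite !big_cons; apply: lerD; rewrite ler_wpM2l.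
Qed.

Lemma mixed_sum_affine (A : Type) (s : seq (R * A)) (a b : R) (F : A -> R) :
  \sum_(x <- s) x.1 = 1 ->
  \sum_(x <- s) x.1 * (a + b * F x.2) = a + b * \sum_(x <- s) x.1 * F x.2.
Proof.
move=> s1; rewrite (eq_bigr (fun x => a * x.1 + b * (x.1 * F x.2))) => [|x _].
  by rewrite big_split -!mulr_sumr s1 mulr1.
by rewrite mulrDr mulrCA mulrC.
Qed.

End WeightedLists.

Section PositivePart.
Variable R : realFieldType.

Definition pospart (x : R) := Num.max x 0.

Lemma pospart_ge0 x : 0 <= pospart x.
Proof. by rewrite /pospart le_max lexx orbT. Qed.

Lemma ler_pospart : {homo pospart : x y / x <= y}.
Proof.
by move=> x y ?; rewrite /pospart !maxEle; case: (leP x 0); case: (leP y 0); lra.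
Qed.

Lemma pospart_ge x : x <= pospart x.
Proof. by rewrite /pospart le_max lexx. Qed.

(* [z |-> pospart (|z| - m) ^+ 2] has derivative
   [2 (pospart (z - m) - pospart (- z - m))], which is 2-Lipschitz. *)
Lemma sqr_pospart_taylor (x y m : R) : 0 <= m ->
  pospart (`|y| - m) ^+ 2 <= pospart (`|x| - m) ^+ 2
     + 2 * (pospart (x - m) - pospart (- x - m)) * (y - x) + (y - x) ^+ 2.
Proof.
move=> hm; have := sqr_ge0 (y - x); rewrite /pospart !maxEle !expr2.
have [hx|hx] := lerP 0 x; rewrite ?(ger0_norm hx) ?(ltr0_norm hx);
have [hy|hy] := lerP 0 y; rewrite ?(ger0_norm hy) ?(ltr0_norm hy);
case: (leP (x - m) 0) => ?; case: (leP (- x - m) 0) => ?;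
case: (leP (y - m) 0) => ?; case: (leP (- y - m) 0) => ?; nra.
Qed.

(* Expand both outcomes around the mean [S + p - d]: the first-order terms
   cancel, and raising the threshold by [e >= |p - d|] absorbs the shift of
   the mean away from [S]. *)
Lemma sqr_pospart_bernoulli_step (S m d p e : R) :
  0 <= m -> 0 <= e -> 0 <= p <= 1 -> `|p - d| <= e ->
  p * pospart (`|S + 1 - d| - (m + e)) ^+ 2
   + (1 - p) * pospart (`|S - d| - (m + e)) ^+ 2
  <= pospart (`|S| - m) ^+ 2 + p * (1 - p).
Proof.
move=> hm he /andP[hp0 hp1] hpd; set x := S + p - d.
have hme : 0 <= m + e by lra.
have := sqr_pospart_taylor x (S + 1 - d) hme.
have := sqr_pospart_taylor x (S - d) hme.
have -> : S + 1 - d - x = 1 - p by rewrite /x; ring.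
have -> : S - d - x = - p by rewrite /x; ring.
set F := pospart (`|x| - (m + e)) ^+ 2.
have hF : F <= pospart (`|S| - m) ^+ 2.
  rewrite /F ler_pXn2r ?nnegrE ?pospart_ge0 //; apply: ler_pospart.
  have : `|x| <= `|S| + `|p - d| by rewrite /x -addrA ler_normD.
  lra.
move=> h0 h1; have := ler_wpM2l hp0 h1.
have hp1' : 0 <= 1 - p by lra.
have := ler_wpM2l hp1' h0.
rewrite !expr2; nra.
Qed.

End PositivePart.

Section TwoPointMinimax.
Variable R : realFieldType.

Lemma exists_mix_nonpos (u1 w1 u2 w2 p : R) : 0 <= p <= 1 ->
  p * u1 + (1 - p) * w1 <= 0 -> p * u2 + (1 - p) * w2 <= 0 ->
  w1 < u1 -> u2 < w2 ->
  exists2 lam, 0 <= lam <= 1 &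
    lam * u1 + (1 - lam) * u2 <= 0 /\ lam * w1 + (1 - lam) * w2 <= 0.
Proof.
move=> /andP[hp0 hp1] h1 h2 hs1 hs2.
set D := (u1 - w1) + (w2 - u2).
have hD : 0 < D by rewrite /D; lra.
have hnum : (u1 - w1) * w2 - (u2 - w2) * w1 <= 0 by nra.
exists ((w2 - u2) / D).
  by rewrite divr_ge0 /= ?ler_pdivrMr // ?mul1r /D; lra.
have E (a b : R) : (w2 - u2) / D * a + (1 - (w2 - u2) / D) * b
   = ((w2 - u2) * a + (u1 - w1) * b) / D.
  by rewrite /D; field; rewrite -/D lt0r_neq0.
by rewrite !E !ler_pdivrMr // !mul0r; split; nra.
Qed.

Definition nonpos_mix (K : nat) (u w : nat -> R) :=
  exists i j lam, [/\ (i <= K)%N, (j <= K)%N, 0 <= lam <= 1,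
    lam * u i + (1 - lam) * u j <= 0 & lam * w i + (1 - lam) * w j <= 0].

Variables (K : nat) (u w : nat -> R).
Hypothesis mix_ends_nonpos : forall i, (i <= K)%N ->
  (i%:R / K.+1%:R) * u i + (1 - i%:R / K.+1%:R) * w i <= 0 /\
  (i.+1%:R / K.+1%:R) * u i + (1 - i.+1%:R / K.+1%:R) * w i <= 0.

Let nonpos_mix_pure i : (i <= K)%N -> u i <= 0 -> w i <= 0 -> nonpos_mix K u w.
Proof.
by move=> hi hu hw; exists i, i, 1; split; rewrite ?ler01 ?lexx ?subrr ?mul0r ?addr0 ?mul1r.
Qed.

(* Scan the cells upwards: [w 0 <= 0] (probability [0]), and as long as no
   mixture works [u] stays positive; the first cell with [u <= 0] is mixed
   with its predecessor. *)
Let nonpos_mix_scan j : (j <= K)%N ->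
  nonpos_mix K u w \/ (w j <= 0 /\ 0 < u j).
Proof.
have hK : (0 : R) < K.+1%:R by rewrite ltr0Sn.
elim: j => [_|j IH hj].
  have [hw _] := mix_ends_nonpos (leq0n K).
  rewrite mulr0n !mul0r subr0 mul1r add0r in hw.
  by case: (leP (u 0%N) 0) => hu; [left; apply: (@nonpos_mix_pure 0%N) | right].
have [|[hw hu]] := IH (ltnW hj); first by left.
have [_ hA] := mix_ends_nonpos (ltnW hj).
have [hB _] := mix_ends_nonpos hj.
set p := j.+1%:R / K.+1%:R in hA hB.
have hp0 : 0 <= p by rewrite divr_ge0 ?ler0n.
have hp1 : p < 1 by rewrite ltr_pdivrMr // mul1r ltr_nat.
case: (leP (u j.+1) 0) => hu1; last by right; split => //; nra.
case: (leP (w j.+1) 0) => hw1; first by left; apply: (@nonpos_mix_pure j.+1).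
have hp : 0 <= p <= 1 by rewrite hp0 ltW.
have hwu : w j < u j by lra.
have huw : u j.+1 < w j.+1 by lra.
have [lam hl [h1 h2]] := exists_mix_nonpos hp hA hB hwu huw.
by left; exists j, j.+1, lam; split => //; apply: ltnW.
Qed.

Lemma exists_nonpos_mix : nonpos_mix K u w.
Proof.
have [//|[_ hu]] := nonpos_mix_scan (leqnn K).
have [_] := mix_ends_nonpos (leqnn K).
by rewrite divff ?lt0r_neq0 ?ltr0Sn // subrr mul0r addr0 mul1r; lra.
Qed.

End TwoPointMinimax.

Section Potential.
Variables (R : realType) (n : nat).
Local Notation N := n.+1.
Local Notation hist := (history N).

Definition cell_sum (h : hist) (i : 'I_N) : R :=
  \sum_(p <- h) (if p.2 == i then p.1%:R - grid R i else 0).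

Definition cell_count (h : hist) (i : 'I_N) : R :=
  \sum_(p <- h) (if p.2 == i then 1 else 0).

Definition half_width : R := (2 * N)%:R^-1.

(* Each use of cell [i] is granted an error of [half_width], the distance
   from [grid i] to the ends of its cell [[i/N, (i+1)/N]]. *)
Definition cell_excess (h : hist) (i : 'I_N) : R :=
  pospart (`|cell_sum h i| - cell_count h i * half_width).

Definition potential (h : hist) : R := \sum_(i < N) cell_excess h i ^+ 2.

Lemma half_width_ge0 : 0 <= half_width.
Proof. by rewrite invr_ge0 ler0n. Qed.

Lemma cell_count_ge0 h i : 0 <= cell_count h i.
Proof. by apply: sumr_ge0 => p _; case: ifP; rewrite ?ler01. Qed.

Lemma cell_sum_rcons h a c i : cell_sum (rcons h (a, c)) i =
  cell_sum h i + (if c == i then a%:R - grid R i else 0).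
Proof. by rewrite /cell_sum big_rcons. Qed.

Lemma cell_count_rcons h a c i :
  cell_count (rcons h (a, c)) i = cell_count h i + (if c == i then 1 else 0).
Proof. by rewrite /cell_count big_rcons. Qed.

Lemma potential_rcons h a c :
  potential (rcons h (a, c)) = potential h - cell_excess h c ^+ 2
    + pospart (`|cell_sum h c + a%:R - grid R c|
               - (cell_count h c * half_width + half_width)) ^+ 2.
Proof.
rewrite /potential (bigD1 c) //= [in RHS](bigD1 c) //=.
rewrite (eq_bigr (fun i => cell_excess h i ^+ 2)); last first.
  move=> i /negPf hi.
  by rewrite /cell_excess cell_sum_rcons cell_count_rcons eq_sym hi !addr0.
rewrite /cell_excess cell_sum_rcons cell_count_rcons eqxx mulrDl mul1r addrA.
ring.
Qed.

Lemma potential_nil : potential [::] = 0.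
Proof.
rewrite /potential big1 // => i _.
by rewrite /cell_excess /cell_sum /cell_count !big_nil normr0 mul0r subrr
  /pospart maxxx expr0n.
Qed.

Lemma potential_step_le h (c : 'I_N) (p : R) :
  0 <= p <= 1 -> `|p - grid R c| <= half_width ->
  p * (potential (rcons h (true, c)) - potential h - 4^-1)
  + (1 - p) * (potential (rcons h (false, c)) - potential h - 4^-1) <= 0.
Proof.
move=> hp hpc; rewrite !potential_rcons /= mulr1n mulr0n addr0.
have hm := mulr_ge0 (cell_count_ge0 h c) half_width_ge0.
have := sqr_pospart_bernoulli_step (cell_sum h c) hm half_width_ge0 hp hpc.
have hp4 : p * (1 - p) <= 4^-1.
  have := sqr_ge0 (p - 2^-1).
  have -> : (4 : R)^-1 = 2^-1 * 2^-1 by rewrite -invfM; congr (_^-1); ring.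
  rewrite expr2; nra.
move: hp => /andP[hp0 hp1]; rewrite -/(cell_excess h c); nra.
Qed.

Record two_point := TwoPoint { tp_cell1 : 'I_N; tp_cell2 : 'I_N; tp_prob1 : R }.

Definition potential_stable (h : hist) (d : two_point) :=
  0 <= tp_prob1 d <= 1 /\ forall a,
    tp_prob1 d * potential (rcons h (a, tp_cell1 d))
    + (1 - tp_prob1 d) * potential (rcons h (a, tp_cell2 d))
    <= potential h + 4^-1.

Lemma cell_ends_sub_grid (i : 'I_N) :
  i%:R / N%:R - grid R i = - half_width /\ i.+1%:R / N%:R - grid R i = half_width.
Proof.
rewrite /grid /half_width; move: (i : nat) => k.
rewrite -[k.+1]addn1 !natrD !natrM; split; field;
  by rewrite addrC natr1 pnatr_eq0.
Qed.

(* The ends [i/N] and [(i+1)/N] of cell [i] are within [half_width] of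
   [grid i], so [potential_step_le] provides the hypothesis of
   [exists_nonpos_mix]. *)
Lemma exists_potential_stable h : exists d, potential_stable h d.
Proof.
pose U k := potential (rcons h (true, inord k)) - potential h - 4^-1.
pose W k := potential (rcons h (false, inord k)) - potential h - 4^-1.
have hN : (0 : R) < N%:R by rewrite ltr0Sn.
have [|i [j [lam [_ _ hl h1 h2]]]] := @exists_nonpos_mix R n U W.
  move=> i hi; have [E1 E2] := cell_ends_sub_grid (inord i : 'I_N).
  rewrite inordK // in E1 E2.
  split; apply: potential_step_le; rewrite ?E1 ?E2 ?normrN ?ger0_norm
    ?half_width_ge0 // divr_ge0 ?ler0n //= ler_pdivrMr // mul1r ler_nat //.
  exact: leqW.
exists (TwoPoint (inord i) (inord j) lam); split => // -[] /=.
  by move: h1; rewrite /U; lra.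
by move: h2; rewrite /W; lra.
Qed.

End Potential.

Arguments cell_sum {R n}.
Arguments cell_count {R n}.
Arguments cell_excess {R n}.
Arguments potential {R n}.

Section PlayFrom.
Variable n : nat.
Local Notation N := n.+1.
Local Notation hist := (history N).
Local Notation fs := (fc_strat N).

Fixpoint play_from (h : hist) (r : rain_strat N) (f : fs) k : hist :=
  if k is k'.+1 then let h' := play_from h r f k' in rcons h' (r h', f h')
  else h.

Lemma play_from_nil r f k : play r f k = play_from [::] r f k.
Proof. by elim: k => //= k ->. Qed.

Lemma size_play_from h r f k : size (play_from h r f k) = (size h + k)%N.
Proof. by elim: k => [|k IH] /=; rewrite ?addn0 // size_rcons IH addnS. Qed.

Lemma play_fromS h r f k :
  play_from h r f k.+1 = play_from (rcons h (r h, f h)) r f k.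
Proof. by elim: k => [//|k IH]; rewrite [in RHS]/= -IH. Qed.

Lemma play_from_extends h r f k : exists s, play_from h r f k = h ++ s.
Proof.
elim: k => [|k [s IH]] /=; first by exists [::]; rewrite cats0.
by exists (rcons s (r (h ++ s), f (h ++ s))); rewrite IH rcons_cat.
Qed.

Lemma eq_play_from h r f g k : (forall s, f (h ++ s) = g (h ++ s)) ->
  play_from h r f k = play_from h r g k.
Proof.
move=> E; elim: k => //= k ->.
by have [s ->] := play_from_extends h r g k; rewrite E.
Qed.

(* Forecast [c] at history [h], then continue with [f1] if it rained at
   that step and with [f0] otherwise. *)
Definition fork (h : hist) (c : 'I_N) (f0 f1 : fs) : fs := fun h' =>
  if (size h' <= size h)%N then c
  else if (nth (false, c) h' (size h)).1 then f1 h' else f0 h'.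

Lemma fork_at h c f0 f1 : fork h c f0 f1 h = c.
Proof. by rewrite /fork leqnn. Qed.

Lemma play_from_fork h c f0 f1 a r k :
  play_from (rcons h (a, c)) r (fork h c f0 f1) k
  = play_from (rcons h (a, c)) r (if a then f1 else f0) k.
Proof.
apply: eq_play_from => s; rewrite /fork size_cat size_rcons addSn.
by rewrite ltnNge leq_addr /= cat_rcons nth_cat ltnn subnn /=; case: a.
Qed.

End PlayFrom.

Section BehaviorStrategy.
Variables (R : realType) (n : nat).
Local Notation N := n.+1.
Local Notation hist := (history N).
Local Notation fs := (fc_strat N).

Definition fork_mix (lam : R) (h : hist) (c : 'I_N) (s0 s1 : seq (R * fs)) :=
  [seq (lam * x.1 * y.1, fork h c x.2 y.2) | x <- s0, y <- s1].

Lemma fork_mix_ge0 lam h c s0 s1 : 0 <= lam ->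
  all (fun x => 0 <= x.1) s0 -> all (fun x => 0 <= x.1) s1 ->
  all (fun x => 0 <= x.1) (fork_mix lam h c s0 s1).
Proof. by move=> l0 s0P s1P; apply: all_allpairs s0P s1P _ => x y /= *; rewrite !mulr_ge0. Qed.

Lemma sum_fork_mix lam h c s0 s1 : \sum_(z <- fork_mix lam h c s0 s1) z.1
  = lam * (\sum_(x <- s0) x.1) * (\sum_(y <- s1) y.1).
Proof.
rewrite big_allpairs_dep -mulrA big_distrlr mulr_sumr; apply: eq_bigr => x _.
by rewrite mulr_sumr; apply: eq_bigr => y _; rewrite mulrA.
Qed.

(* Only the subtree matching the realised weather matters; the other one
   contributes its total weight. *)
Lemma expected_fork_mix (F : hist -> R) r k lam h c s0 s1 :
  \sum_(z <- fork_mix lam h c s0 s1) z.1 * F (play_from h r z.2 k.+1)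
  = lam * (\sum_(x <- if r h then s1 else s0)
              x.1 * F (play_from (rcons h (r h, c)) r x.2 k))
        * (\sum_(y <- if r h then s0 else s1) y.1).
Proof.
rewrite big_allpairs_dep.
under eq_bigr => x _ do under eq_bigr => y _ do
  rewrite play_fromS /= fork_at play_from_fork.
rewrite -mulrA big_distrlr mulr_sumr; case: (r h) => /=; first rewrite exchange_big.
all: by apply: eq_bigr => x _; rewrite mulr_sumr; apply: eq_bigr => y _; ring.
Qed.

Variable sel : hist -> two_point R n.
Hypothesis sel_stable : forall h, potential_stable h (sel h).

(* Kuhn's theorem: the behaviour strategy that plays [sel h] at every
   history [h], written as a mixture of pure strategies.  The pure strategies
   of the two continuation trees are paired independently. *)
Fixpoint tree_mix (k : nat) (h : hist) : seq (R * fs) :=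
  if k is k'.+1 then
    let: TwoPoint c1 c2 p := sel h in
    fork_mix p h c1 (tree_mix k' (rcons h (false, c1)))
                    (tree_mix k' (rcons h (true, c1)))
    ++ fork_mix (1 - p) h c2 (tree_mix k' (rcons h (false, c2)))
                             (tree_mix k' (rcons h (true, c2)))
  else [:: (1, fun _ => ord0)].

Lemma tree_mix_mixed k h : is_mixed (tree_mix k h).
Proof.
elim: k h => [|k IH] h /=; first by rewrite /is_mixed big_seq1 /= ler01.
have [/andP[p0 p1] _] := sel_stable h.
case: (sel h) p0 p1 => c1 c2 p /= p0 p1; have p1' : 0 <= 1 - p by lra.
split; first by rewrite all_cat !fork_mix_ge0 //; apply: (IH _).1.
by rewrite big_cat !sum_fork_mix !(IH _).2 !mulr1; apply: subrKC.
Qed.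

Lemma expected_potential_tree r k h :
  \sum_(x <- tree_mix k h) x.1 * potential (play_from h r x.2 k)
  <= potential h + k%:R / 4.
Proof.
elim: k h => [|k IH] h /=; first by rewrite big_seq1 mul1r mul0r addr0.
have [+ /(_ (r h))] := sel_stable h.
case: (sel h) => c1 c2 p /= /andP[p0 p1] stable.
have p1' : 0 <= 1 - p by lra.
have tree_le a c : \sum_(x <- if a then tree_mix k (rcons h (true, c))
                                   else tree_mix k (rcons h (false, c)))
    x.1 * potential (play_from (rcons h (a, c)) r x.2 k)
    <= potential (rcons h (a, c)) + k%:R / 4.
  by case: a; apply: IH.
have tree_sum1 a c : \sum_(y <- if a then tree_mix k (rcons h (false, c))
                                      else tree_mix k (rcons h (true, c))) y.1 = 1.
  by case: a; apply: (tree_mix_mixed _ _).2.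
rewrite big_cat !expected_fork_mix !tree_sum1 !mulr1.
apply: le_trans (lerD (ler_wpM2l p0 (tree_le _ c1)) (ler_wpM2l p1' (tree_le _ c2))) _.
rewrite -[k.+1]addn1 natrD; lra.
Qed.

End BehaviorStrategy.

Section Calibration.
Variables (R : realType) (n : nat).
Local Notation N := n.+1.
Local Notation hist := (history N).

Lemma sum_cell_count (h : hist) : \sum_(i < N) cell_count h i = (size h)%:R :> R.
Proof.
rewrite /cell_count exchange_big /= -sum1_size natr_sum.
apply: eq_bigr => p _; rewrite (bigD1 p.2) //= eqxx big1 ?addr0 // => i.
by rewrite eq_sym => /negPf ->.
Qed.

(* Each [|cell_sum h i|] exceeds its tolerance by at most [cell_excess h i],
   and [x <= x ^+ 2 / (2 lam) + lam / 2] by AM-GM. *)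
Lemma calib_le_potential (h : hist) (lam : R) : 0 < lam -> (0 < size h)%N ->
  calib R (size h) h <= half_width R n + (size h)%:R^-1 * (N%:R * lam / 2)
    + (size h)%:R^-1 / (2 * lam) * potential h.
Proof.
move=> hl hT; set t := (size h)%:R; have ht : 0 < t by rewrite ltr0n.
have cell_le i : `|cell_sum h i| <= cell_count h i * half_width R n
    + (cell_excess h i ^+ 2 / (2 * lam) + lam / 2).
  have := pospart_ge (`|cell_sum h i| - cell_count h i * half_width R n).
  have : 0 <= (cell_excess h i - lam) ^+ 2 / (2 * lam).
    by rewrite divr_ge0 ?sqr_ge0 // mulr_ge0 ?ltW.
  have -> : (cell_excess h i - lam) ^+ 2 / (2 * lam)
      = cell_excess h i ^+ 2 / (2 * lam) + lam / 2 - cell_excess h i.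
    by field; rewrite lt0r_neq0.
  rewrite -/(cell_excess h i); lra.
rewrite /calib -[X in X <= _]/(t^-1 * \sum_(i < N) `|cell_sum h i|).
have -> : half_width R n + t^-1 * (N%:R * lam / 2) + t^-1 / (2 * lam) * potential h
    = t^-1 * (t * half_width R n + (N%:R * lam / 2 + potential h / (2 * lam))).
  by field; rewrite !lt0r_neq0.
rewrite ler_pM2l ?invr_gt0 //.
apply: le_trans (ler_sum _ (fun i _ => cell_le i)) _.
rewrite big_split /= -mulr_suml sum_cell_count big_split /= -mulr_suml.
rewrite sumr_const card_ord /potential -mulr_natr; lra.
Qed.

Lemma calib_budget (t m lam : R) :
  0 < m -> m ^+ 3 <= t -> lam = t / (2 * m ^+ 2) ->
  (2 * m)^-1 + t^-1 * (m * lam / 2) + t^-1 / (2 * lam) * (t / 4) <= m^-1.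
Proof.
move=> hm hm3 ->; have ht : 0 < t by apply: lt_le_trans hm3; rewrite exprn_gt0.
have -> : (2 * m)^-1 + t^-1 * (m * (t / (2 * m ^+ 2)) / 2)
          + t^-1 / (2 * (t / (2 * m ^+ 2))) * (t / 4)
        = (2 * m)^-1 + (4 * m)^-1 + (4 * m)^-1 * (m ^+ 3 / t).
  by field; rewrite !lt0r_neq0.
have h3 : m ^+ 3 / t <= 1 by rewrite ler_pdivrMr // mul1r.
have h4 : 0 <= (4 * m)^-1 by rewrite invr_ge0 ltW // mulr_gt0.
have -> : m^-1 = (2 * m)^-1 + (4 * m)^-1 + (4 * m)^-1.
  by field; rewrite lt0r_neq0.
nra.
Qed.

Variables (sel : hist -> two_point R n) (T : nat).
Hypothesis sel_stable : forall h, potential_stable h (sel h).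

Lemma tree_calib_le r : (N ^ 3 <= T)%N ->
  \sum_(p <- tree_mix sel T [::]) p.1 * calib R T (play r p.2 T) <= N%:R^-1.
Proof.
move=> hT; have hT0 : (0 < T)%N by apply: leq_trans hT; rewrite expn_gt0.
have hm3 : N%:R ^+ 3 <= T%:R :> R by rewrite -natrX ler_nat.
pose lam : R := T%:R / (2 * N%:R ^+ 2).
have hl : 0 < lam by rewrite divr_gt0 ?ltr0n // mulr_gt0 // exprn_gt0.
have [w0 w1] := tree_mix_mixed sel_stable T [::].
pose a := half_width R n + T%:R^-1 * (N%:R * lam / 2).
pose b := T%:R^-1 / (2 * lam).
have hb : 0 <= b by rewrite divr_ge0 ?invr_ge0 ?ler0n // mulr_ge0 ?ltW.
have calib_le f : calib R T (play r f T) <= a + b * potential (play_from [::] r f T).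
  have := @calib_le_potential (play_from [::] r f T) _ hl.
  by rewrite size_play_from play_from_nil; apply.
have hexp := expected_potential_tree sel_stable r T [::].
rewrite potential_nil add0r in hexp.
apply: le_trans (ler_wsum w0 calib_le) _.
rewrite (mixed_sum_affine a b (fun f => potential (play_from [::] r f T)) w1).
apply: le_trans (lerD (lexx a) (ler_wpM2l hb hexp)) _.
by rewrite /a /b /half_width natrM; apply: calib_budget.
Qed.

End Calibration.

Lemma expected_calib_le_pure (R : realType) (N T : nat)
    (mf : seq (R * fc_strat N)) (mr : seq (R * rain_strat N)) (b : R) :
  is_mixed mr ->
  (forall r, \sum_(p <- mf) p.1 * calib R T (play r p.2 T) <= b) ->
  expected_calib T mf mr <= b.
Proof.
move=> [mr0 mr1] pure_le; rewrite /expected_calib exchange_big /=.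
rewrite (eq_bigr (fun q => q.1 * \sum_(p <- mf) p.1 * calib R T (play q.2 p.2 T))).
  by apply: le_trans (ler_wsum mr0 pure_le) _; rewrite -mulr_suml mr1 mul1r.
by move=> q _; rewrite mulr_sumr; apply: eq_bigr => p _; rewrite mulrA (mulrC q.1).
Qed.

Theorem theorem2 (R : realType) (N T : nat) :
  (1 <= N)%N -> (N ^ 3 <= T)%N ->
  exists mf : seq (R * fc_strat N),
    is_mixed mf /\
    forall mr : seq (R * rain_strat N),
      is_mixed mr -> expected_calib T mf mr <= N%:R^-1.
Proof.
case: N => [//|n] _ hT.
have [sel sel_stable] := @functional_choice _ _ _ (@exists_potential_stable R n).
exists (tree_mix sel T [::]); split; first exact: tree_mix_mixed.
move=> mr mr_mixed; apply: expected_calib_le_pure mr_mixed _ => r.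
exact: tree_calib_le.
Qed.
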